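(* Let $M$ and $N$ be compact metric spaces, $f\colon M\to M$ and $g\colon N\to N$ homeomorphisms, and $q\colon M\to N$ a continuous, surjective, open map with $q\circ f=g\circ q$. If $f$ has the L-shadowing property, then $g$ has the L-shadowing property.
   Context: A homeomorphism $f$ of a compact metric space $(X,d)$ has the L-shadowing property if for every $\varepsilon>0$ there is $\delta>0$ such that every sequence $(x_k)_{k\in\mathbb{Z}}$ with $d(f(x_k),x_{k+1})\le\delta$ for all $k$ and $d(f(x_k),x_{k+1})\to0$ as $|k|\to\infty$ admits $z$ with $d(f^k(z),x_k)\le\varepsilon$ for all $k$ and $d(f^k(z),x_k)\to0$ as $|k|\to\infty$. *)

From Stdlib Require Import Reals ZArith List.
Open Scope R_scope.

Record is_metric {X : Type} (d : X -> X -> R) : Prop := {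
  dist_nonneg : forall x y, 0 <= d x y;
  dist_eq0 : forall x y, d x y = 0 <-> x = y;
  dist_sym : forall x y, d x y = d y x;
  dist_tri : forall x y z, d x z <= d x y + d y z
}.

Definition seq_conv {X : Type} (d : X -> X -> R) (u : nat -> X) (l : X) : Prop :=
  forall eps, 0 < eps -> exists N : nat, forall n, (N <= n)%nat -> d (u n) l < eps.

Definition is_open {X : Type} (d : X -> X -> R) (U : X -> Prop) : Prop :=
  forall x, U x -> exists r, 0 < r /\ forall y, d x y < r -> U y.

Definition compact_metric {X : Type} (d : X -> X -> R) : Prop :=
  forall (I : Type) (U : I -> X -> Prop),
    (forall i, is_open d (U i)) ->
    (forall x, exists i, U i x) ->
    exists l : list I, forall x, exists i, List.In i l /\ U i x.

Definition continuous_map {X Y : Type} (dX : X -> X -> R) (dY : Y -> Y -> R)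
  (f : X -> Y) : Prop :=
  forall x eps, 0 < eps -> exists delta, 0 < delta /\
    forall y, dX x y < delta -> dY (f x) (f y) < eps.

Definition homeomorphism {X : Type} (d : X -> X -> R) (f : X -> X) : Prop :=
  continuous_map d d f /\
  exists g : X -> X, continuous_map d d g /\
    (forall x, g (f x) = x) /\ (forall x, f (g x) = x).

Definition open_map {X Y : Type} (dX : X -> X -> R) (dY : Y -> Y -> R)
  (q : X -> Y) : Prop :=
  forall U : X -> Prop, is_open dX U ->
    is_open dY (fun y => exists x, U x /\ q x = y).

Definition tends_to_zero_Z (a : Z -> R) : Prop :=
  forall eps, 0 < eps -> exists K : Z, forall k, (K <= Z.abs k)%Z -> Rabs (a k) < eps.

(* For a bijection f, the full orbit of z is the unique y : Z -> X with
   y 0 = z and f (y k) = y (k+1) for all k, i.e. y k = f^k z. *)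
Definition L_shadowing {X : Type} (d : X -> X -> R) (f : X -> X) : Prop :=
  forall eps, 0 < eps -> exists delta, 0 < delta /\
    forall x : Z -> X,
      (forall k, d (f (x k)) (x (k + 1)%Z) <= delta) ->
      tends_to_zero_Z (fun k => d (f (x k)) (x (k + 1)%Z)) ->
      exists y : Z -> X,
        (forall k, f (y k) = y (k + 1)%Z) /\
        (forall k, d (y k) (x k) <= eps) /\
        tends_to_zero_Z (fun k => d (y k) (x k)).

(* Given a g-pseudo-orbit y with jumps tending to 0, we
   lift it to an f-pseudo-orbit p with q o p = y, shadow p by an f-orbit z,
   and project: q o z is a g-orbit shadowing y.  The lift must keep the jumps
   of p small, uniformly and asymptotically, which rests on:
   - compactness gives uniform continuity and *uniform openness* of q: points
     eta-close to q z have preimages gamma-close to z (via a Lebesgue number);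
   - a single "near-optimal" choice of lifts: a preimage of y' which is within
     1/(n+1) of x whenever some preimage of y' is; such a choice is as close
     as uniform openness allows, for every scale simultaneously;
   - forward we lift y_(k+1) near f p_k, backward we lift y_(k-1) near f^-1 p_k,
     and in both directions a small jump of y yields a small jump of p. *)

From Stdlib Require Import Reals ZArith List Lia Lra Classical ClassicalEpsilon.
Open Scope R_scope.

Lemma dist_self {X} (d : X -> X -> R) x : is_metric d -> d x x = 0.
Proof. intros Hm. now apply (dist_eq0 d Hm). Qed.

Lemma ball_open {X} (d : X -> X -> R) x r : is_metric d -> is_open d (fun z => d x z < r).
Proof.
  intros Hm z Hz. exists (r - d x z). split; [lra|].
  intros w Hw. pose proof (dist_tri d Hm x z w). lra.
Qed.

Lemma inv_S_pos n : 0 < / INR (S n).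
Proof. apply Rinv_0_lt_compat, lt_0_INR. lia. Qed.

Lemma inv_S_le m n : (m <= n)%nat -> / INR (S n) <= / INR (S m).
Proof. intros H. apply Rinv_le_contravar; [apply lt_0_INR; lia | apply le_INR; lia]. Qed.

Lemma inv_S_small eps : 0 < eps -> exists n, / INR (S n) < eps.
Proof.
  intros He. destruct (archimed_cor1 eps He) as [n [Hn Hn0]].
  exists (pred n). now replace (S (pred n)) with n by lia.
Qed.

Lemma tends_to_zero_transfer (a b : Z -> R) :
  (forall k, 0 <= a k) -> (forall k, 0 <= b k) ->
  (forall e, 0 < e -> exists eta, 0 < eta /\ forall k, a k < eta -> b k < e) ->
  tends_to_zero_Z a -> tends_to_zero_Z b.
Proof.
  intros Ha Hb Hab Ht e He.
  destruct (Hab e He) as [eta [Heta Hsmall]].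
  destruct (Ht eta Heta) as [K HK]. exists K. intros k Hk.
  specialize (HK k Hk). rewrite Rabs_pos_eq in HK by apply Ha.
  rewrite Rabs_pos_eq by apply Hb. auto.
Qed.

Lemma lebesgue_radius {X} (d : X -> X -> R) (rho : X -> R) :
  is_metric d -> compact_metric d -> (forall x, 0 < rho x) ->
  exists eta, 0 < eta /\ forall z, exists x, d x z < rho x /\ eta <= rho x.
Proof.
  intros Hm Hc Hr.
  destruct (Hc X (fun x z => d x z < rho x)) as [l Hl].
  - intro x. now apply ball_open.
  - intro x. exists x. rewrite dist_self; auto.
  - exists (fold_right (fun x acc => Rmin (rho x) acc) 1 l). split.
    + clear Hl. induction l; simpl; [lra|]. now apply Rmin_pos.
    + intro z. destruct (Hl z) as [x [Hin Hx]]. exists x. split; auto.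
      clear Hl Hx. induction l as [|c l IH]; simpl in *; [contradiction|].
      destruct Hin as [<-|Hin]; [apply Rmin_l|].
      eapply Rle_trans; [apply Rmin_r | auto].
Qed.

Lemma uniform_continuity {X Y} (dX : X -> X -> R) (dY : Y -> Y -> R) (h : X -> Y) :
  is_metric dX -> is_metric dY -> compact_metric dX -> continuous_map dX dY h ->
  forall eps, 0 < eps -> exists del, 0 < del /\
    forall a b, dX a b < del -> dY (h a) (h b) < eps.
Proof.
  intros HX HY Hc Hh eps He.
  destruct (choice (fun x s => 0 < s /\ forall y, dX x y < s -> dY (h x) (h y) < eps / 2))
    as [s Hs].
  { intro x. apply Hh. lra. }
  destruct (lebesgue_radius dX (fun x => s x / 2) HX Hc) as [eta [Heta Hleb]].
  { intro x. destruct (Hs x). lra. }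
  exists eta. split; auto. intros a b Hab.
  destruct (Hleb a) as [x [Hxa Heta_x]]. destruct (Hs x) as [_ Hsx].
  pose proof (dist_tri dX HX x a b).
  pose proof (Hsx a ltac:(lra)). pose proof (Hsx b ltac:(lra)).
  pose proof (dist_tri dY HY (h a) (h x) (h b)).
  rewrite (dist_sym dY HY (h a) (h x)) in *. lra.
Qed.

Section Lifting.

Variables (M N : Type) (dM : M -> M -> R) (dN : N -> N -> R) (q : M -> N).
Hypotheses (HM : is_metric dM) (HN : is_metric dN) (cM : compact_metric dM).
Hypotheses (q_cont : continuous_map dM dN q) (q_surj : forall y, exists x, q x = y).
Hypothesis q_open : open_map dM dN q.

Lemma uniform_openness gam : 0 < gam -> exists eta, 0 < eta /\
  forall z y', dN (q z) y' < eta -> exists x', q x' = y' /\ dM z x' < gam.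
Proof.
  intros Hg.
  destruct (choice (fun x r => 0 < r /\ forall y, dN (q x) y < r ->
              exists x', dM x x' < gam / 2 /\ q x' = y)) as [r Hr].
  { intro x. apply (q_open _ (ball_open dM x _ HM) (q x)).
    exists x. rewrite dist_self; auto. split; [lra | auto]. }
  destruct (choice (fun x s => 0 < s /\ forall y, dM x y < s -> dN (q x) (q y) < r x / 2))
    as [s Hs].
  { intro x. apply q_cont. destruct (Hr x). lra. }
  destruct (lebesgue_radius dM (fun x => Rmin (r x / 2) (Rmin (s x) (gam / 2))) HM cM)
    as [eta [Heta Hleb]].
  { intro x. destruct (Hr x), (Hs x). repeat apply Rmin_pos; lra. }
  exists eta. split; auto. intros z y' Hzy.
  destruct (Hleb z) as [x [Hxz Hrho]].
  destruct (Hs x) as [_ Hsx]. destruct (Hr x) as [_ Hrx].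
  pose proof (Rmin_l (r x / 2) (Rmin (s x) (gam / 2))).
  pose proof (Rmin_r (r x / 2) (Rmin (s x) (gam / 2))).
  pose proof (Rmin_l (s x) (gam / 2)). pose proof (Rmin_r (s x) (gam / 2)).
  pose proof (Hsx z ltac:(lra)).
  pose proof (dist_tri dN HN (q x) (q z) y').
  destruct (Hrx y' ltac:(lra)) as [x' [Hxx' Hqx']].
  exists x'. split; auto.
  pose proof (dist_tri dM HM z x x'). rewrite (dist_sym dM HM z x) in *. lra.
Qed.

Definition near_optimal_lift (x : M) (y' : N) (x' : M) : Prop :=
  q x' = y' /\ forall n,
    (exists x'', q x'' = y' /\ dM x x'' < / INR (S n)) -> dM x x' < / INR (S n).

Lemma lies_over_of_close_lifts x y' :
  (forall n, exists x'', q x'' = y' /\ dM x x'' < / INR (S n)) -> q x = y'.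
Proof.
  intros Hclose. apply NNPP. intros Hne.
  assert (Hpos : 0 < dN (q x) y').
  { destruct (dist_nonneg dN HN (q x) y') as [|Hz]; auto.
    exfalso. now apply Hne, (dist_eq0 dN HN). }
  destruct (q_cont x _ Hpos) as [del [Hdel Hc]].
  destruct (inv_S_small del Hdel) as [n Hn].
  destruct (Hclose n) as [x'' [Hq Hd]].
  pose proof (Hc x'' ltac:(lra)). rewrite Hq in *. lra.
Qed.

Lemma near_optimal_lift_exists x y' : exists x', near_optimal_lift x y' x'.
Proof.
  set (close := fun n => exists x'', q x'' = y' /\ dM x x'' < / INR (S n)).
  assert (Hdown : forall n m, close n -> (m <= n)%nat -> close m).
  { intros n m [x'' [Hq Hd]] Hmn. exists x''. split; auto.
    pose proof (inv_S_le m n Hmn). lra. }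
  destruct (classic (forall n, close n)) as [Hall | Hnot].
  - exists x. split; [now apply lies_over_of_close_lifts|].
    intros n _. rewrite dist_self; auto. apply inv_S_pos.
  - apply not_all_ex_not in Hnot. destruct Hnot as [m Hm].
    induction m as [|m IH].
    + destruct (q_surj y') as [x' Hx']. exists x'. split; auto.
      intros n Hn. exfalso. apply Hm, (Hdown n); [auto | lia].
    + destruct (classic (close m)) as [[x' [Hq Hd]] | Hsm]; [|exact (IH Hsm)].
      exists x'. split; auto. intros n Hn.
      assert (Hnm : (n <= m)%nat).
      { destruct (Nat.le_gt_cases n m); auto.
        exfalso. apply Hm, (Hdown n); [auto | lia]. }
      pose proof (inv_S_le n m Hnm). lra.
Qed.

Lemma near_optimal_lift_close gam : 0 < gam -> exists eta, 0 < eta /\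
  forall x y' x', near_optimal_lift x y' x' -> dN (q x) y' < eta -> dM x x' < gam.
Proof.
  intros Hg. destruct (inv_S_small gam Hg) as [n Hn].
  destruct (uniform_openness _ (inv_S_pos n)) as [eta [Heta Hopen]].
  exists eta. split; auto. intros x y' x' [_ Hopt] Hxy.
  pose proof (Hopt n (Hopen x y' Hxy)). lra.
Qed.

End Lifting.

Arguments near_optimal_lift {M N} dM q x y' x'.

Lemma Z_cases k : (exists n, k = Z.of_nat n) \/ (exists n, k = (- Z.of_nat (S n))%Z).
Proof.
  destruct (Z_le_gt_dec 0 k).
  - left. exists (Z.to_nat k). rewrite Z2Nat.id; lia.
  - right. exists (Z.to_nat (- k - 1)). rewrite Nat2Z.inj_succ, Z2Nat.id; lia.
Qed.

Section Factor.

Variables (M N : Type) (dM : M -> M -> R) (dN : N -> N -> R).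
Variables (f fi : M -> M) (g gi : N -> N) (q : M -> N) (lift : M -> N -> M).
Hypotheses (HM : is_metric dM) (HN : is_metric dN).
Hypotheses (cM : compact_metric dM) (cN : compact_metric dN).
Hypotheses (f_cont : continuous_map dM dM f) (gi_cont : continuous_map dN dN gi).
Hypotheses (f_fi : forall x, f (fi x) = x) (gi_g : forall y, gi (g y) = y).
Hypotheses (q_cont : continuous_map dM dN q) (q_surj : forall y, exists x, q x = y).
Hypotheses (q_open : open_map dM dN q) (q_semiconj : forall x, q (f x) = g (q x)).
Hypothesis lift_spec : forall x y', near_optimal_lift dM q x y' (lift x y').

Lemma q_semiconj_inv x : q (fi x) = gi (q x).
Proof. now rewrite <- (gi_g (q (fi x))), <- q_semiconj, f_fi. Qed.

Definition step_control (gam eta : R) : Prop :=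
  (forall a y', dN (g (q a)) y' < eta -> dM (f a) (lift (f a) y') < gam) /\
  (forall b y', dN (g y') (q b) < eta -> dM (f (lift (fi b) y')) b < gam).

Lemma step_control_exists gam : 0 < gam -> exists eta, 0 < eta /\ step_control gam eta.
Proof.
  intros Hg.
  destruct (near_optimal_lift_close M N dM dN q HM HN cM q_cont q_open gam Hg)
    as [e1 [He1 Hfw]].
  destruct (uniform_continuity dM dM f HM HM cM f_cont gam Hg) as [g2 [Hg2 Hf]].
  destruct (near_optimal_lift_close M N dM dN q HM HN cM q_cont q_open g2 Hg2)
    as [e2 [He2 Hbw]].
  destruct (uniform_continuity dN dN gi HN HN cN gi_cont e2 He2) as [e3 [He3 Hgi]].
  exists (Rmin e1 e3). split; [now apply Rmin_pos | split].
  - intros a y' Hjump. apply (Hfw _ y'); [apply lift_spec|].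
    rewrite q_semiconj. pose proof (Rmin_l e1 e3). lra.
  - intros b y' Hjump. pose proof (Rmin_r e1 e3).
    pose proof (Hgi (g y') (q b) ltac:(lra)) as Hback.
    rewrite gi_g, <- q_semiconj_inv, (dist_sym dN HN) in Hback.
    pose proof (Hf _ _ (Hbw _ _ _ (lift_spec _ _) Hback)) as Hfwd.
    rewrite f_fi in Hfwd. now rewrite (dist_sym dM HM).
Qed.

Fixpoint forward_lift (y : Z -> N) (p0 : M) (n : nat) : M :=
  match n with
  | O => p0
  | S m => lift (f (forward_lift y p0 m)) (y (Z.of_nat (S m)))
  end.

Fixpoint backward_lift (y : Z -> N) (p0 : M) (n : nat) : M :=
  match n with
  | O => p0
  | S m => lift (fi (backward_lift y p0 m)) (y (- Z.of_nat (S m))%Z)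
  end.

Definition lifted_seq (y : Z -> N) (p0 : M) (k : Z) : M :=
  match k with
  | Z0 => p0
  | Zpos n => forward_lift y p0 (Pos.to_nat n)
  | Zneg n => backward_lift y p0 (Pos.to_nat n)
  end.

Lemma lifted_seq_nonneg y p0 n : lifted_seq y p0 (Z.of_nat n) = forward_lift y p0 n.
Proof. destruct n; simpl; auto. now rewrite SuccNat2Pos.id_succ. Qed.

Lemma lifted_seq_neg y p0 n : lifted_seq y p0 (- Z.of_nat n)%Z = backward_lift y p0 n.
Proof. destruct n; simpl; auto. now rewrite SuccNat2Pos.id_succ. Qed.

Lemma lifted_seq_over y p0 : q p0 = y 0%Z -> forall k, q (lifted_seq y p0 k) = y k.
Proof.
  intros Hp0 k. destruct (Z_cases k) as [[n ->] | [n ->]].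
  - rewrite lifted_seq_nonneg. destruct n; simpl; auto. apply (proj1 (lift_spec _ _)).
  - rewrite lifted_seq_neg. apply (proj1 (lift_spec _ _)).
Qed.

Lemma lifted_seq_jump y p0 gam eta k :
  q p0 = y 0%Z -> step_control gam eta ->
  dN (g (y k)) (y (k + 1)%Z) < eta ->
  dM (f (lifted_seq y p0 k)) (lifted_seq y p0 (k + 1)%Z) < gam.
Proof.
  intros Hp0 [Hfw Hbw] Hjump. pose proof (lifted_seq_over y p0 Hp0) as Hover.
  destruct (Z_cases k) as [[n ->] | [n ->]].
  - replace (Z.of_nat n + 1)%Z with (Z.of_nat (S n)) in * by lia.
    rewrite !lifted_seq_nonneg. simpl. apply Hfw.
    now rewrite <- lifted_seq_nonneg, Hover.
  - replace (- Z.of_nat (S n) + 1)%Z with (- Z.of_nat n)%Z in * by lia.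
    rewrite !lifted_seq_neg. simpl. apply Hbw.
    now rewrite <- lifted_seq_neg, Hover.
Qed.

Lemma L_shadowing_factor : L_shadowing dM f -> L_shadowing dN g.
Proof.
  intros Lf eps Heps.
  destruct (uniform_continuity dM dN q HM HN cM q_cont eps Heps) as [e1 [He1 Hq]].
  destruct (Lf (e1 / 2) ltac:(lra)) as [d1 [Hd1 Hshadow]].
  destruct (step_control_exists d1 Hd1) as [eta [Heta Hstep]].
  exists (eta / 2). split; [lra|]. intros y Hjump Hjump0.
  destruct (q_surj (y 0%Z)) as [p0 Hp0].
  destruct (Hshadow (lifted_seq y p0)) as [z [Horbit [Hclose Hclose0]]].
  - intro k. left. apply (lifted_seq_jump y p0 d1 eta k Hp0 Hstep).
    pose proof (Hjump k). lra.
  - apply (tends_to_zero_transfer (fun k => dN (g (y k)) (y (k + 1)%Z)));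
      [intro; apply (dist_nonneg dN HN) | intro; apply (dist_nonneg dM HM) | | exact Hjump0].
    intros e He. destruct (step_control_exists e He) as [eta' [Heta' Hstep']].
    exists eta'. split; auto. intro k. now apply lifted_seq_jump.
  - exists (fun k => q (z k)). split; [|split].
    + intro k. now rewrite <- q_semiconj, Horbit.
    + intro k. rewrite <- (lifted_seq_over y p0 Hp0 k). left.
      apply Hq. pose proof (Hclose k). lra.
    + apply (tends_to_zero_transfer (fun k => dM (z k) (lifted_seq y p0 k)));
        [intro; apply (dist_nonneg dM HM) | intro; apply (dist_nonneg dN HN) | | exact Hclose0].
      intros e He. destruct (uniform_continuity dM dN q HM HN cM q_cont e He)
        as [e2 [He2 Hq2]].
      exists e2. split; auto. intros k Hk.
      rewrite <- (lifted_seq_over y p0 Hp0 k). now apply Hq2.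
Qed.

End Factor.

Theorem mainTheorem15 (M N : Type) (dM : M -> M -> R) (dN : N -> N -> R)
  (f : M -> M) (g : N -> N) (q : M -> N) :
  is_metric dM -> is_metric dN ->
  compact_metric dM -> compact_metric dN ->
  homeomorphism dM f -> homeomorphism dN g ->
  continuous_map dM dN q ->
  (forall y : N, exists x : M, q x = y) ->
  open_map dM dN q ->
  (forall x : M, q (f x) = g (q x)) ->
  L_shadowing dM f -> L_shadowing dN g.
Proof.
  intros HM HN cM cN [f_cont [fi [_ [_ f_fi]]]] [_ [gi [gi_cont [gi_g _]]]]
    q_cont q_surj q_open q_semiconj.
  destruct (choice (fun xy x' => near_optimal_lift dM q (fst xy) (snd xy) x'))
    as [lift lift_spec].
  { intros [x y']. exact (near_optimal_lift_exists M N dM dN q HM HN q_cont q_surj x y'). }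
  exact (L_shadowing_factor M N dM dN f fi g gi q (fun x y' => lift (x, y'))
           HM HN cM cN f_cont gi_cont f_fi gi_g q_cont q_surj q_open q_semiconj
           (fun x y' => lift_spec (x, y'))).
Qed.
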